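(* Let $\mathcal{A}=(\mathcal{H},|s_0\rangle,\Sigma,\{U_\sigma\},F)$ be a quantum automaton, $w\in\Sigma^\omega$ and $\lambda\in[0,1)$. Then $w\in\mathcal{L}^{>\lambda}(\mathcal{A}|\mathrm{D})$ if and only if there exist a real $\varepsilon>0$ and a unit vector $|\psi\rangle\in F$ such that $w=u_0u_1u_2\cdots$ with finite words $u_i$ satisfying: $u_0\in\mathcal{L}^{>\lambda+\varepsilon}(\mathcal{A}_{s_0,\psi}|\mathrm{MO})$, and $u_1,u_2,\ldots\in\mathcal{L}^{>\lambda+\varepsilon}(\mathcal{A}_{\psi,\psi}|\mathrm{MO})\setminus\{\epsilon\}$.
   Context: A quantum automaton is a tuple $\mathcal{A}=(\mathcal{H},|s_0\rangle,\Sigma,\{U_\sigma:\sigma\in\Sigma\},F)$ where $\mathcal{H}$ is a finite-dimensional complex Hilbert space, $|s_0\rangle$ a unit vector, $\Sigma$ a finite alphabet, each $U_\sigma$ unitary, and $F$ a subspace. For finite $x=\sigma_1\cdots\sigma_m$, $U_x=U_{\sigma_m}\cdots U_{\sigma_1}$ ($U_\epsilon=I$, $\epsilon$ the empty word); for a quantum automaton $\mathcal{C}$ with initial state $|c_0\rangle$ and accepting space $G$ (projection $P_G$), $f^{\mathrm{MO}}_{\mathcal{C}}(x)=\|P_GU_x|c_0\rangle\|^2$ and $\mathcal{L}^{>\mu}(\mathcal{C}|\mathrm{MO})=\{x\in\Sigma^*:f^{\mathrm{MO}}_{\mathcal{C}}(x)>\mu\}$. For unit vectors $|u\rangle,|v\rangle\in\mathcal{H}$,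 $\mathcal{A}_{u,v}=(\mathcal{H},|u\rangle,\Sigma,\{U_\sigma\},\mathrm{span}\{|v\rangle\})$, so $f^{\mathrm{MO}}_{\mathcal{A}_{u,v}}(x)=|\langle v|U_x|u\rangle|^2$. Disturbing acceptance: for $w=\sigma_1\sigma_2\cdots\in\Sigma^\omega$, a unit $|\psi\rangle\in F$ and checkpoints $0\le n_1<n_2<\cdots$, the disturbing run is $|s_0\rangle$ and for $n\ge1$: $|s_n\rangle=U_{\sigma_n}|\psi\rangle$ if $n-1=n_i$ for some $i$, else $|s_n\rangle=U_{\sigma_n}|s_{n-1}\rangle$; $f^{\mathrm{D}}_{\mathcal{A}}(w)=\sup_{|\psi\rangle}\sup_{\{n_i\}}\inf_{i\ge1}|\langle\psi|s_{n_i}\rangle|^2$ over unit $|\psi\rangle\in F$ and strictly increasing checkpoint sequences, and $\mathcal{L}^{>\lambda}(\mathcal{A}|\mathrm{D})=\{w\in\Sigma^\omega:f^{\mathrm{D}}_{\mathcal{A}}(w)>\lambda\}$. *)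

From HB Require Import structures.
From mathcomp Require Import all_boot all_order all_algebra.
From mathcomp Require Import boolp classical_sets reals constructive_ereal ereal.
From mathcomp Require Import complex.
Set Implicit Arguments. Unset Strict Implicit. Unset Printing Implicit Defensive.
Import Order.TTheory GRing.Theory Num.Theory.
Local Open Scope ring_scope.
Local Open Scope classical_set_scope.

Section QA.
Variables (R : realType) (n : nat) (Sigma : finType).
Local Notation C := (R[i]).
Local Notation vec := 'cV[C]_n.

Definition csqnorm (z : C) : R := (complex.Re z) ^+ 2 + (complex.Im z) ^+ 2.

Definition inner (v u : vec) : C := \sum_(i < n) conjc (v i 0) * u i 0.

Definition unit_vec (v : vec) : Prop := inner v v = 1.

Definition adjoint (A : 'M[C]_n) : 'M[C]_n := (map_mx conjc A)^T.
Definition unitary (A : 'M[C]_n) : Prop := adjoint A *m A = 1%:M.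

(* Subspace F of H given as the row space of a matrix F; v in F iff v^T <= F *)
Definition in_subspace (F : 'M[C]_n) (v : vec) : Prop := (v^T <= F)%MS.

(* U_x = U_{s_m} ... U_{s_1} for x = s_1 ... s_m *)
Definition Uword (U : Sigma -> 'M[C]_n) (x : seq Sigma) : 'M[C]_n :=
  foldl (fun M s => U s *m M) 1%:M x.

Definition fMO_uv (U : Sigma -> 'M[C]_n) (u v : vec) (x : seq Sigma) : R :=
  csqnorm (inner v (Uword U x *m u)).

Definition LMO_uv (U : Sigma -> 'M[C]_n) (u v : vec) (mu : R) : set (seq Sigma) :=
  [set x | mu < fMO_uv U u v x].

(* infinite words w = s_1 s_2 ... are encoded as w : nat -> Sigma, w k = s_{k+1};
   checkpoints n_1 < n_2 < ... are encoded as ns : nat -> nat, ns i = n_{i+1}. *)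
Fixpoint drun (U : Sigma -> 'M[C]_n) (s0 psi : vec) (w : nat -> Sigma)
    (ns : nat -> nat) (k : nat) : vec :=
  match k with
  | 0 => s0
  | k'.+1 => U (w k') *m (if `[< exists i, ns i = k' >] then psi else drun U s0 psi w ns k')
  end.

Definition strictly_increasing (ns : nat -> nat) : Prop := forall i, (ns i < ns i.+1)%N.

Definition fD (U : Sigma -> 'M[C]_n) (s0 : vec) (F : 'M[C]_n) (w : nat -> Sigma) : \bar R :=
  ereal_sup [set r | exists psi ns, [/\ unit_vec psi, in_subspace F psi,
     strictly_increasing ns &
     r = ereal_inf [set ((csqnorm (inner psi (drun U s0 psi w ns (ns i))))%:E) | i in setT]]].

Definition LD (U : Sigma -> 'M[C]_n) (s0 : vec) (F : 'M[C]_n) (lambda : R) : set (nat -> Sigma) :=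
  [set w | (lambda%:E < fD U s0 F w)%E].

(* w = u_0 u_1 u_2 ... : every finite concatenation u_0 ... u_m is a prefix of w
   (this determines w when infinitely many u_i are nonempty). *)
Definition omega_concat (u : nat -> seq Sigma) (w : nat -> Sigma) : Prop :=
  forall m, let p := flatten [seq u i | i <- iota 0 m.+1] in p = mkseq w (size p).

End QA.

From HB Require Import structures.
From mathcomp Require Import all_boot all_order all_algebra.
From mathcomp Require Import boolp classical_sets reals constructive_ereal ereal.
From mathcomp Require Import complex.
From mathcomp Require Import lra zify.
Set Implicit Arguments. Unset Strict Implicit. Unset Printing Implicit Defensive.
Import Order.TTheory GRing.Theory Num.Theory.
Local Open Scope ring_scope.
Local Open Scope classical_set_scope.

(* Between two consecutive checkpoints n_k < n_(k+1) the disturbing run evolves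
   undisturbed from |psi>, so its overlap with |psi> at n_(k+1) is the MO
   acceptance value of A_(psi,psi) on the block w[n_k, n_(k+1)); at n_1 it is
   that of A_(s0,psi) on w[0, n_1).  Cutting w at the checkpoints turns a
   checkpoint sequence into a decomposition w = u_0 u_1 ... with nonempty u_k
   (k > 0), and the ends of the prefixes u_0 ... u_k turn such a decomposition
   back into checkpoints.  Since f^D(w) > lambda means that some psi and some
   checkpoints keep all overlaps above lambda + eps, the two conditions match. *)

Definition subword (T : Type) (w : nat -> T) (a l : nat) : seq T :=
  map w (iota a l).

Definition checkpoint_blocks (T : Type) (w : nat -> T) (ns : nat -> nat)
    (k : nat) : seq T :=
  if k is k'.+1 then subword w (ns k') (ns k'.+1 - ns k') else subword w 0 (ns 0).

Definition concat_upto (T : Type) (u : nat -> seq T) (m : nat) : seq T :=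
  flatten [seq u i | i <- iota 0 m.+1].

Definition block_ends (T : Type) (u : nat -> seq T) (m : nat) : nat :=
  size (concat_upto u m).

Definition is_checkpoint (ns : nat -> nat) (t : nat) : Prop := exists i, ns i = t.

Section Words.
Variable T : Type.
Implicit Types (w : nat -> T) (u : nat -> seq T).

Lemma size_subword w a l : size (subword w a l) = l.
Proof. by rewrite size_map size_iota. Qed.

Lemma subwordD w a l1 l2 :
  subword w a (l1 + l2) = subword w a l1 ++ subword w (a + l1) l2.
Proof. by rewrite /subword iotaD map_cat. Qed.

Lemma subwordSr w a l : subword w a l.+1 = rcons (subword w a l) (w (a + l)%N).
Proof. by rewrite -addn1 subwordD cats1. Qed.

Lemma concat_upto0 u : concat_upto u 0 = u 0%N.
Proof. by rewrite /concat_upto /= cats0. Qed.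

Lemma concat_uptoS u m : concat_upto u m.+1 = concat_upto u m ++ u m.+1.
Proof.
by rewrite /concat_upto -(addn1 m.+1) iotaD map_cat flatten_cat /= cats0.
Qed.

Lemma block_endsS u m : block_ends u m.+1 = (block_ends u m + size (u m.+1))%N.
Proof. by rewrite /block_ends concat_uptoS size_cat. Qed.

Lemma concat_upto_checkpoint_blocks w ns :
  (forall k, ns k <= ns k.+1)%N ->
  forall m, concat_upto (checkpoint_blocks w ns) m = subword w 0 (ns m).
Proof.
move=> ns_le; elim=> [|m IH]; first by rewrite concat_upto0.
by rewrite concat_uptoS IH -subwordD subnKC.
Qed.

Lemma checkpoint_blocksS_neq_nil w ns k :
  (ns k < ns k.+1)%N -> checkpoint_blocks w ns k.+1 <> [::].
Proof. by move=> lt_ns /(congr1 size); rewrite size_subword /=; lia. Qed.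

Lemma strictly_increasing_block_ends u :
  (forall k, u k.+1 <> [::]) -> strictly_increasing (block_ends u).
Proof.
move=> u_neq0 m; rewrite block_endsS -[X in (X < _)%N]addn0 ltn_add2l lt0n.
by case: (u m.+1) (u_neq0 m).
Qed.

End Words.

Lemma omega_concat_checkpoint_blocks (Sigma : finType) (w : nat -> Sigma) ns :
  (forall k, ns k <= ns k.+1)%N -> omega_concat (checkpoint_blocks w ns) w.
Proof.
move=> ns_le m.
by rewrite -/(concat_upto _ m) concat_upto_checkpoint_blocks //= size_subword.
Qed.

Lemma omega_concat_block_endsE (Sigma : finType) (u : nat -> seq Sigma) w :
  omega_concat u w -> u =1 checkpoint_blocks w (block_ends u).
Proof.
move=> uw; have prefixE m : concat_upto u m = subword w 0 (block_ends u m).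
  exact: uw m.
case=> [|m] /=; first by rewrite -prefixE concat_upto0.
have le_ends : (block_ends u m <= block_ends u m.+1)%N.
  by rewrite block_endsS leq_addr.
have := prefixE m.+1.
rewrite concat_uptoS prefixE -{1}(subnKC le_ends) subwordD add0n => /eqP.
by rewrite eqseq_cat ?size_subword // => /andP[_ /eqP].
Qed.

Lemma strictly_increasing_mono ns :
  strictly_increasing ns -> {mono ns : i j / (i < j)%N}.
Proof. by move=> ns_incr; apply/leqW_mono/leq_mono/(homo_ltn ltn_trans). Qed.

Lemma no_checkpoint_before_first ns t :
  strictly_increasing ns -> (t < ns 0%N)%N -> ~ is_checkpoint ns t.
Proof.
move=> /strictly_increasing_mono ns_mono + [i nsi].
by rewrite -nsi ns_mono.
Qed.

Lemma no_checkpoint_between ns k t :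
  strictly_increasing ns -> (ns k < t < ns k.+1)%N -> ~ is_checkpoint ns t.
Proof.
move=> /strictly_increasing_mono ns_mono + [i nsi].
by rewrite -nsi !ns_mono; lia.
Qed.

Section DisturbingRun.
Variables (R : realType) (n : nat) (Sigma : finType).
Variables (U : Sigma -> 'M[R[i]]_n) (s0 psi : 'cV[R[i]]_n).
Variables (w : nat -> Sigma) (ns : nat -> nat).
Local Notation run := (drun U s0 psi w ns).

Lemma Uword_rcons x s : Uword U (rcons x s) = U s *m Uword U x.
Proof. by rewrite /Uword foldl_rcons. Qed.

Lemma drun_before_checkpoints j :
  (forall t, (t < j)%N -> ~ is_checkpoint ns t) ->
  run j = Uword U (subword w 0 j) *m s0.
Proof.
elim: j => [|j IH] no_cp; first by rewrite /= /Uword /= mul1mx.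
rewrite /= asboolF; last exact: no_cp.
rewrite IH => [|t /ltnW]; last exact: no_cp.
by rewrite subwordSr Uword_rcons mulmxA.
Qed.

Lemma drun_after_checkpoint a j :
  is_checkpoint ns a -> (forall t, (0 < t < j)%N -> ~ is_checkpoint ns (a + t)) ->
  (0 < j)%N -> run (a + j) = Uword U (subword w a j) *m psi.
Proof.
move=> cp_a; elim: j => [|[|j] IH] // no_cp _.
  by rewrite addn1 /= asboolT // /subword /= /Uword /= mulmx1.
rewrite addnS /= asboolF; last by apply: no_cp; rewrite ltnSn.
rewrite IH // => [|t /andP[t_gt0 /ltnW t_lt]]; last by apply: no_cp; rewrite t_gt0.
by rewrite [subword w a j.+2]subwordSr Uword_rcons mulmxA.
Qed.

Hypothesis ns_incr : strictly_increasing ns.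

Lemma drun_checkpoint_blocks k :
  run (ns k) = Uword U (checkpoint_blocks w ns k) *m (if k is 0 then s0 else psi).
Proof.
case: k => [|k] /=.
  by apply: drun_before_checkpoints => t; apply: no_checkpoint_before_first.
rewrite -{1}(subnKC (ltnW (ns_incr k))) drun_after_checkpoint //.
- by exists k.
- by move=> t t_in; apply: (no_checkpoint_between (k := k) ns_incr); lia.
- by rewrite subn_gt0.
Qed.

Lemma overlap_checkpoint_blocks k :
  csqnorm (inner psi (run (ns k))) =
  fMO_uv U (if k is 0 then s0 else psi) psi (checkpoint_blocks w ns k).
Proof. by rewrite drun_checkpoint_blocks. Qed.

End DisturbingRun.

Lemma ereal_inf_gtP (R : realType) (I : Type) (f : I -> R) (l : R) :
  (l%:E < ereal_inf [set (f i)%:E | i in setT])%E <->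
  exists2 eps, 0 < eps & forall i, l + eps < f i.
Proof.
set S := [set _ | i in _]; have S_f i : S (f i)%:E by exists i.
split; last first.
  move=> [eps eps_gt0 f_gt]; apply: (@lt_le_trans _ _ (l + eps)%:E).
    by rewrite lte_fin ltrDl.
  by apply/ereal_infP => _ [i _ <-]; rewrite lee_fin ltW.
case E : (ereal_inf S) => [r| |] // l_lt; last first.
  by exists 1 => // i; have := ereal_inf_lbound (S_f i); rewrite E.
have r_le i : r <= f i by rewrite -lee_fin -E; apply: ereal_inf_lbound.
exists ((r - l) / 2) => [|i]; rewrite lte_fin in l_lt; first lra.
by have := r_le i; lra.
Qed.

Lemma in_LD_checkpointsP (R : realType) (n : nat) (Sigma : finType)
    (U : Sigma -> 'M[R[i]]_n) (s0 : 'cV[R[i]]_n) (F : 'M[R[i]]_n)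
    (w : nat -> Sigma) (lambda : R) :
  w \in LD U s0 F lambda <->
  exists psi ns, [/\ unit_vec psi, in_subspace F psi, strictly_increasing ns &
    exists2 eps, 0 < eps &
      forall i, lambda + eps < csqnorm (inner psi (drun U s0 psi w ns (ns i)))].
Proof.
rewrite in_setE /LD /=; split.
  move=> /ereal_sup_gt [_ [psi [ns [psi_unit psi_F ns_incr ->]]]].
  by move=> /ereal_inf_gtP overlap_gt; exists psi, ns.
move=> [psi [ns [psi_unit psi_F ns_incr /ereal_inf_gtP overlap_gt]]].
by apply: (lt_le_trans overlap_gt); apply: ereal_sup_ubound; exists psi, ns.
Qed.

Theorem proposition6 (R : realType) (n : nat) (Sigma : finType)
  (s0 : 'cV[R[i]]_n) (U : Sigma -> 'M[R[i]]_n) (F : 'M[R[i]]_n)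
  (hs0 : unit_vec s0) (hU : forall s, unitary (U s))
  (w : nat -> Sigma) (lambda : R) (hl0 : 0 <= lambda) (hl1 : lambda < 1) :
  w \in LD U s0 F lambda <->
  exists (eps : R) (psi : 'cV[R[i]]_n), [/\ 0 < eps, unit_vec psi, in_subspace F psi &
    exists u : nat -> seq Sigma, [/\ omega_concat u w,
      u 0%N \in LMO_uv U s0 psi (lambda + eps) &
      forall k, (0 < k)%N -> u k \in LMO_uv U psi psi (lambda + eps) /\ u k <> [::]]].
Proof.
rewrite in_LD_checkpointsP; split.
- move=> [psi [ns [psi_unit psi_F ns_incr [eps eps_gt0 overlap_gt]]]].
  exists eps, psi; split => //; exists (checkpoint_blocks w ns); split.
  + by apply: omega_concat_checkpoint_blocks => k; apply: ltnW.
  + by rewrite in_setE; have := overlap_gt 0%N; rewrite overlap_checkpoint_blocks.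
  + case=> // k _; split; last exact: checkpoint_blocksS_neq_nil (ns_incr k).
    by rewrite in_setE; have := overlap_gt k.+1; rewrite overlap_checkpoint_blocks.
- move=> [eps [psi [eps_gt0 psi_unit psi_F [u [uw u0 uS]]]]].
  have ends_incr : strictly_increasing (block_ends u).
    by apply: strictly_increasing_block_ends => k; have [] := uS k.+1 isT.
  exists psi, (block_ends u); split => //; exists eps => // k.
  rewrite overlap_checkpoint_blocks // -(omega_concat_block_endsE uw).
  case: k => [|k]; first by move: u0; rewrite in_setE.
  by have [+ _] := uS k.+1 isT; rewrite in_setE.
Qed.
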